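(* For every $X\in\{\mathsf{T},\mathsf{S}\}^*$, $X\mathsf{T}\mathsf{S}\mathsf{T}\sqsubseteq X\mathsf{T}$.
   Context: Fix attribute–taxonomy pairs $A_1{:}T_1,\dots,A_d{:}T_d$ with distinct attribute names, where each taxonomy $T_i=(V_i,\le_{V_i})$ is a poset. A t-tuple over a t-schema $S\subseteq\{A_1{:}T_1,\dots,A_d{:}T_d\}$ maps each $A_i$ in $S$ to a value of $V_i$; $\mathcal{D}$ is the set of all t-tuples over all such t-schemas. A preference relation is a binary relation $\succeq$ on $\mathcal{D}$. Preferences are given by a formula $F(x,y)=\bigvee_i P_i(x,y)$, a disjunction of statements; each statement $P_i$ is a disjunction of clauses, each clause a satisfiable conjunction of atoms of the forms $x[A_i]\le_{V_i} v$, $x[A_i]\not\le_{V_i} v$, $y[A_i]\le_{V_i} v$, $y[A_i]\not\le_{V_i} v$; the formula induces $t_1\succeq t_2\iff F(t_1,t_2)$. Operator $\mathsf{T}$ maps a formula to one inducing the transitive closure over $\mathcal{D}$ of the induced relation. Operator $\mathsf{S}$ (specificity-based refinement): repeat rounds; in a round, for each statement $P_i$ let $\mathrm{Impl}(P_i)$ be the set of statements $P_j$ such that $P_j(t_2,t_1)\Rightarrow P_i(t_1,t_2)$ for all $t_1,t_2\in\mathcal{D}$ but not conversely; simultaneously replace every $P_i$ with nonempty $\mathrm{Impl}(P_i)$ by $P_i(x,y)\wedge\bigwedge_{P_j\in \mathrm{Impl}(P_i)}\neg P_j(y,x)$; stop when no $\mathrm{Impl}$ set is nonempty. After each operator, contradictory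 clauses and subsumed statements are removed. For $X\in\{\mathsf{T},\mathsf{S}\}^*$, $\succeq_X$ is the relation induced by applying the operators of $X$ in order to the initial formula. Containment $X\sqsubseteq Y$ means $\succeq_X\subseteq\succeq_Y$ for every initial preference formula. *)

From Stdlib Require Import Relation_Definitions Relation_Operators ClassicalEpsilon.
From mathcomp Require Import all_boot.

Set Implicit Arguments.
Unset Strict Implicit.
Unset Printing Implicit Defensive.

Record taxonomy := Taxonomy {
  tcar :> Type;
  tle : tcar -> tcar -> Prop;
  tle_refl : forall x, tle x x;
  tle_anti : forall x y, tle x y -> tle y x -> x = y;
  tle_trans : forall x y z, tle x y -> tle y z -> tle x z }.

(** Attributes A_1..A_d are the indices 'I_d; attribute i carries taxonomy
    [Tx i].  A t-tuple over a t-schema S is encoded as a partial map: the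
    schema is the set of indices where the value is [Some _].  Hence
    [ttuple Tx] is exactly the set D of all t-tuples over all t-schemas. *)
Definition ttuple (d : nat) (Tx : 'I_d -> taxonomy) :=
  forall i : 'I_d, option (Tx i).

Inductive side := SX | SY.

(* atom  x[A_i] <= v  (a_pos = true)  or  x[A_i] </= v  (a_pos = false) *)
Record atom (d : nat) (Tx : 'I_d -> taxonomy) := Atom {
  a_side : side; a_attr : 'I_d; a_val : Tx a_attr; a_pos : bool }.

Definition clause d (Tx : 'I_d -> taxonomy) := seq (atom Tx).
Definition statement d (Tx : 'I_d -> taxonomy) := seq (clause Tx).
Definition formula d (Tx : 'I_d -> taxonomy) := seq (statement Tx).

Section Semantics.
Variables (d : nat) (Tx : 'I_d -> taxonomy).

Definition atom_holds (a : atom Tx) (t1 t2 : ttuple Tx) : Prop :=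
  let t := if a_side a is SX then t1 else t2 in
  let le := match t (a_attr a) with Some u => tle u (a_val a) | None => False end in
  if a_pos a then le else ~ le.

Definition clause_holds (c : clause Tx) t1 t2 : Prop :=
  foldr (fun a P => atom_holds a t1 t2 /\ P) True c.
Definition stmt_holds (P : statement Tx) t1 t2 : Prop :=
  foldr (fun c Q => clause_holds c t1 t2 \/ Q) False P.
Definition formula_holds (F : formula Tx) t1 t2 : Prop :=
  foldr (fun P Q => stmt_holds P t1 t2 \/ Q) False F.

Definition induced (F : formula Tx) : relation (ttuple Tx) :=
  fun t1 t2 => formula_holds F t1 t2.

Definition clause_sat (c : clause Tx) : Prop :=
  exists t1 t2, clause_holds c t1 t2.

(** Initial formulas: every clause is satisfiable. *)
Definition wf_formula (F : formula Tx) : Prop :=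
  foldr (fun P acc =>
    foldr (fun c acc' => clause_sat c /\ acc') True P /\ acc) True F.

Definition decP (P : Prop) : bool :=
  if excluded_middle_informative P then true else false.

(** * Normalization after each operator:
    remove contradictory (unsatisfiable) clauses, then remove subsumed
    statements (a statement implied by another one; among equivalent
    statements the one with the smallest position is kept). *)
Definition stmt_implies (P Q : statement Tx) : Prop :=
  forall t1 t2, stmt_holds P t1 t2 -> stmt_holds Q t1 t2.

Definition subsumedb (F : formula Tx) (i : nat) : bool :=
  decP (exists j, j < size F /\ j <> i /\
          stmt_implies (nth [::] F i) (nth [::] F j) /\
          (~ stmt_implies (nth [::] F j) (nth [::] F i) \/ j < i)).

Definition normF (F : formula Tx) : formula Tx :=
  let Fs := map (filter (fun c => decP (clause_sat c))) F in
  [seq nth [::] Fs i | i <- iota 0 (size Fs) & ~~ subsumedb Fs i].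

Definition in_impl (F : formula Tx) (i j : nat) : bool :=
  decP ((forall t1 t2, stmt_holds (nth [::] F j) t2 t1 ->
                       stmt_holds (nth [::] F i) t1 t2) /\
        ~ (forall t1 t2, stmt_holds (nth [::] F i) t1 t2 ->
                         stmt_holds (nth [::] F j) t2 t1)).

Definition impl_list (F : formula Tx) (i : nat) : seq (statement Tx) :=
  [seq nth [::] F j | j <- iota 0 (size F) & in_impl F i j].

Definition swap_side s := if s is SX then SY else SX.
Definition negswap (a : atom Tx) : atom Tx :=
  @Atom d Tx (swap_side (a_side a)) (a_attr a) (a_val a) (~~ a_pos a).

(* DNF of  ~ P(y,x) *)
Definition neg_stmt (P : statement Tx) : statement Tx :=
  foldr (fun C acc => [seq a :: c | a <- map negswap C, c <- acc]) [:: [::]] P.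

Definition conj_stmt (P Q : statement Tx) : statement Tx :=
  [seq c1 ++ c2 | c1 <- P, c2 <- Q].

(* P_i  ~>  P_i /\ /\_{P_j in Impl(P_i)} ~ P_j(y,x)   (unchanged if Impl empty) *)
Definition refine_stmt (F : formula Tx) (i : nat) : statement Tx :=
  foldl (fun acc Pj => conj_stmt acc (neg_stmt Pj)) (nth [::] F i) (impl_list F i).

(* one round: all statements replaced simultaneously *)
Definition round (F : formula Tx) : formula Tx :=
  map (refine_stmt F) (iota 0 (size F)).

Definition stable (F : formula Tx) : Prop :=
  forall i, i < size F -> impl_list F i = [::].

Inductive op := OpT | OpS.

Definition is_T_operator (Top : formula Tx -> formula Tx) : Prop :=
  forall F t1 t2, induced (Top F) t1 t2 <-> clos_trans _ (induced F) t1 t2.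

Definition step (Top : formula Tx -> formula Tx) (o : op) (F G : formula Tx) : Prop :=
  match o with
  | OpT => G = normF (Top F)
  | OpS => exists n, stable (iter n round F) /\ G = normF (iter n round F)
  end.

Inductive run (Top : formula Tx -> formula Tx) : seq op -> formula Tx -> formula Tx -> Prop :=
  | run_nil F : run Top [::] F F
  | run_cons o X F G H : step Top o F G -> run Top X G H -> run Top (o :: X) F H.

Definition contained (Top : formula Tx -> formula Tx) (X Y : seq op) : Prop :=
  forall F, wf_formula F ->
  forall GX GY, run Top X F GX -> run Top Y F GY ->
  forall t1 t2, induced GX t1 t2 -> induced GY t1 t2.

End Semantics.

(* Normalisation does not change the induced relation, and the refinement
   rounds of S only conjoin further conditions to statements, so S can only
   shrink the induced relation.  Hence >=_{XTST} is contained in the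
   transitive closure of >=_{XT}, which is already transitive; this uses that
   the operators act deterministically, so both runs pass through the same
   formula after X. *)
From Pilot Require Import Defs.
From Stdlib Require Import Relation_Definitions Relation_Operators ClassicalEpsilon.
From mathcomp Require Import all_boot zify.

Set Implicit Arguments.
Unset Strict Implicit.
Unset Printing Implicit Defensive.

Lemma decPP (P : Prop) : reflect P (Defs.decP P).
Proof. by rewrite /Defs.decP; case: (excluded_middle_informative P); constructor. Qed.

Lemma count_lt_subpred (T : Type) (a1 a2 : pred T) (s : seq T) :
  subpred a1 a2 -> has (predD a2 a1) s -> count a1 s < count a2 s.
Proof.
move=> sub12; elim: s => //= x s IH /orP[/andP[/negbTE-> ->]|has_s].
  by rewrite add0n add1n ltnS sub_count.
rewrite -addnS; apply: leq_add (IH has_s).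
by case a1x: (a1 x); rewrite ?(sub12 _ a1x).
Qed.

Lemma clos_trans_mono (A : Type) (R S : relation A) x y :
  inclusion A R S -> clos_trans A R x y -> clos_trans A S x y.
Proof. by move=> RS; elim=> [a b /RS|a b c _ Rab _ Rbc]; [left | right with b]. Qed.

Lemma clos_trans_idem (A : Type) (R : relation A) x y :
  clos_trans A (clos_trans A R) x y -> clos_trans A R x y.
Proof. by elim=> // a b c _ Rab _ Rbc; right with b. Qed.

Section Preferences.

Variables (d : nat) (Tx : 'I_d -> taxonomy).
Implicit Types (F : formula Tx) (P Q : statement Tx).

Lemma formula_holds_nth F t1 t2 :
  formula_holds F t1 t2 <-> exists2 i, i < size F & stmt_holds (nth [::] F i) t1 t2.
Proof.
elim: F => [|P F IH] /=; first by split=> // -[].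
split=> [[HP|/IH[i lt_i Hi]]|[[|i] /= lt_i Hi]]; [by exists 0 | by exists i.+1 | by left|].
by right; apply/IH; exists i.
Qed.

Lemma formula_holds_map_filter (f : nat -> statement Tx) (p : pred nat) s t1 t2 :
  formula_holds [seq f i | i <- s & p i] t1 t2 <->
  exists i, [/\ i \in s, p i & stmt_holds (f i) t1 t2].
Proof.
elim: s => [|x s IH] /=; first by split=> // -[i []].
case px: (p x) => /=.
  split=> [[Hx|/IH[i [s_i p_i Hi]]]|[i []]].
  - by exists x; rewrite inE eqxx.
  - by exists i; rewrite inE s_i orbT.
  - rewrite inE => /predU1P[-> _ Hx|s_i p_i Hi]; [by left | by right; apply/IH; exists i].
split=> [/IH[i [s_i p_i Hi]]|[i []]]; first by exists i; rewrite inE s_i orbT.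
by rewrite inE => /predU1P[->|s_i p_i Hi]; [rewrite px | apply/IH; exists i].
Qed.

Lemma stmt_holds_filter_sat P t1 t2 :
  stmt_holds [seq c <- P | Defs.decP (clause_sat c)] t1 t2 <-> stmt_holds P t1 t2.
Proof.
elim: P => [|c P IH] //=; case: decPP => [sat_c|unsat_c] /=.
  by split=> -[Hc|HP]; [left | right; apply/IH | left | right; apply/IH].
split=> [/IH|[Hc|/IH //]]; [by right | by case: unsat_c; exists t1, t2].
Qed.

(* The subsumption test of [normF] compares statements by position as well as by
   implication, so following subsumptions strictly decreases this rank. *)
Definition implied_count F i : nat :=
  count (fun j => Defs.decP (stmt_implies (nth [::] F i) (nth [::] F j))) (iota 0 (size F)).

Definition subsumption_rank F i : nat := implied_count F i * size F + i.

Lemma subsumption_rank_lt F j k :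
  j < size F -> k < size F ->
  stmt_implies (nth [::] F j) (nth [::] F k) ->
  ~ stmt_implies (nth [::] F k) (nth [::] F j) \/ k < j ->
  subsumption_rank F k < subsumption_rank F j.
Proof.
move=> lt_j lt_k jk order_kj; rewrite /subsumption_rank.
have sub_kj : subpred (fun x => Defs.decP (stmt_implies (nth [::] F k) (nth [::] F x)))
                      (fun x => Defs.decP (stmt_implies (nth [::] F j) (nth [::] F x))).
  by move=> x /decPP kx; apply/decPP => t1 t2 /jk/kx.
have le_count : implied_count F k <= implied_count F j := sub_count sub_kj _.
case: order_kj => [not_kj|lt_kj]; last by nia.
have lt_count : implied_count F k < implied_count F j.
  apply: count_lt_subpred sub_kj _; apply/hasP; exists j; first by rewrite mem_iota.
  by apply/andP; split; apply/decPP => // [[]].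
by nia.
Qed.

Lemma exists_unsubsumed_implied F i :
  i < size F ->
  exists k, [/\ k < size F, ~~ subsumedb F k & stmt_implies (nth [::] F i) (nth [::] F k)].
Proof.
move=> lt_i; have [m lt_rank] := ubnP (subsumption_rank F i).
elim: m => // m IH in i lt_i lt_rank *.
case sub_i: (subsumedb F i); last by exists i; split=> //; rewrite sub_i.
move: sub_i => /decPP[j [lt_j [_ [ij order_ji]]]].
have lt_ji := subsumption_rank_lt lt_i lt_j ij order_ji.
have [|k [lt_k unsub_k jk]] := IH j lt_j; first exact: leq_trans lt_ji lt_rank.
by exists k; split=> // t1 t2 /ij/jk.
Qed.

Lemma normF_holds F t1 t2 : formula_holds (normF F) t1 t2 <-> formula_holds F t1 t2.
Proof.
rewrite /normF; set Fs := map _ F.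
have size_Fs : size Fs = size F by rewrite size_map.
have nth_Fs i : i < size F ->
    stmt_holds (nth [::] Fs i) t1 t2 <-> stmt_holds (nth [::] F i) t1 t2.
  by move=> lt_i; rewrite (nth_map [::]) //; apply: stmt_holds_filter_sat.
rewrite formula_holds_map_filter formula_holds_nth size_Fs.
split=> [[i [+ _]]|[i lt_i Hi]].
  by rewrite mem_iota => lt_i /(nth_Fs _ lt_i) Hi; exists i.
have [|k [lt_k unsub_k ik]] := @exists_unsubsumed_implied Fs i; first by rewrite size_Fs.
rewrite size_Fs in lt_k; exists k; split; first by rewrite mem_iota.
  exact: unsub_k.
by apply: ik; apply/(nth_Fs _ lt_i).
Qed.


Lemma stmt_holds_cat P Q t1 t2 :
  stmt_holds (P ++ Q) t1 t2 -> stmt_holds P t1 t2 \/ stmt_holds Q t1 t2.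
Proof. by elim: P => [|c P IH] /=; [right | case=> [|/IH]; tauto]. Qed.

Lemma clause_holds_cat_l (c c' : clause Tx) t1 t2 :
  clause_holds (c ++ c') t1 t2 -> clause_holds c t1 t2.
Proof. by elim: c => [|a c IH] //= [Ha /IH]. Qed.

Lemma conj_stmt_holds_l P Q t1 t2 :
  stmt_holds (conj_stmt P Q) t1 t2 -> stmt_holds P t1 t2.
Proof.
rewrite /conj_stmt; elim: P => [|c P IH] //= /stmt_holds_cat[HcQ|/IH]; last by right.
by left; clear IH; elim: Q HcQ => [|c' Q IHQ] //= [/clause_holds_cat_l|/IHQ].
Qed.

Lemma refine_stmt_holds F i t1 t2 :
  stmt_holds (refine_stmt F i) t1 t2 -> stmt_holds (nth [::] F i) t1 t2.
Proof.
rewrite /refine_stmt; elim: (impl_list F i) (nth [::] F i) => [|Q L IH] P //= HPL.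
exact: conj_stmt_holds_l (IH _ HPL).
Qed.

Lemma round_holds F t1 t2 : formula_holds (round F) t1 t2 -> formula_holds F t1 t2.
Proof.
rewrite /round formula_holds_nth size_map size_iota => -[i lt_i].
rewrite (nth_map 0) ?size_iota // nth_iota // add0n => /refine_stmt_holds Hi.
by apply/formula_holds_nth; exists i.
Qed.

Lemma iter_round_holds n F t1 t2 :
  formula_holds (iter n (@round d Tx) F) t1 t2 -> formula_holds F t1 t2.
Proof. by elim: n => [|n IH] //= /round_holds/IH. Qed.

Lemma round_stable F : stable F -> round F = F.
Proof.
move=> stF; rewrite /round -{3}(mkseq_nth [::] F).
by apply/eq_in_map => i; rewrite mem_iota => lt_i; rewrite /refine_stmt stF.
Qed.

Lemma iter_round_stable m n F :
  stable (iter n (@round d Tx) F) -> iter (m + n) (@round d Tx) F = iter n (@round d Tx) F.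
Proof. by move=> stF; elim: m => [|m IH] //; rewrite addSn iterS IH round_stable. Qed.

Section Runs.

Variable Top : formula Tx -> formula Tx.

Lemma step_functional o F G1 G2 : step Top o F G1 -> step Top o F G2 -> G1 = G2.
Proof.
case: o => [-> -> //|[n [st_n ->]] [m [st_m ->]]]; congr normF.
have [le_nm|/ltnW le_mn] := leqP n m.
  by rewrite -(subnK le_nm) iter_round_stable.
by rewrite -(subnK le_mn) iter_round_stable.
Qed.

Lemma run_nilE F G : run Top [::] F G -> G = F.
Proof. by inversion 1. Qed.

Lemma run_consE o X F H :
  run Top (o :: X) F H -> exists2 G, step Top o F G & run Top X G H.
Proof. by move=> r; inversion r; exists G. Qed.

Lemma run_functional X F G1 G2 : run Top X F G1 -> run Top X F G2 -> G1 = G2.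
Proof.
move=> r1; elim: r1 G2 => [F0|o X0 F0 G H s1 _ IH] G2; first by move/run_nilE.
by case/run_consE=> G' s2; rewrite (step_functional s1 s2) in IH; apply: IH.
Qed.

Lemma run_cat X Y F H :
  run Top (X ++ Y) F H -> exists2 G, run Top X F G & run Top Y G H.
Proof.
elim: X F => [|o X IH] F /=; first by exists F => //; constructor.
case/run_consE=> G s /IH[G' rX rY]; exists G' => //; exact: run_cons s rX.
Qed.

Lemma stepT_induced F G t1 t2 : is_T_operator Top ->
  step Top OpT F G -> induced G t1 t2 <-> clos_trans _ (induced F) t1 t2.
Proof. by move=> HT /= ->; rewrite /induced normF_holds; apply: HT. Qed.

Lemma stepS_induced F G t1 t2 : step Top OpS F G -> induced G t1 t2 -> induced F t1 t2.
Proof. by case=> n [_ ->]; rewrite /induced normF_holds => /iter_round_holds. Qed.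

End Runs.

End Preferences.

Theorem mainTheorem3 (d : nat) (Tx : 'I_d -> taxonomy)
  (Top : formula Tx -> formula Tx) (HT : is_T_operator Top) (X : seq op) :
  contained Top (X ++ [:: OpT; OpS; OpT]) (X ++ [:: OpT]).
Proof.
move=> F _ GX GY /run_cat[G rG /run_consE[G1 sT1 /run_consE[G2 sS /run_consE[G3 sT3]]]].
move=> /run_nilE -> /run_cat[G' rG' /run_consE[G4 sT4 /run_nilE ->]] t1 t2.
rewrite (run_functional rG' rG) in sT4.
move=> /(stepT_induced _ _ HT sT3) HX.
apply/(stepT_induced _ _ HT sT4)/clos_trans_idem.
apply: clos_trans_mono HX => a b /(stepS_induced sS).
by move/(stepT_induced _ _ HT sT1).
Qed.
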